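(* For every $k\in\mathbb N$ and every pair of Batanin trees $B,B'$ with $\partial_kB=\partial_kB'$, there exist morphisms of globular sets $\mathrm{inc}^-\colon\mathrm{Pos}(B)\to\mathrm{Pos}(B\ast_kB')$ and $\mathrm{inc}^+\colon\mathrm{Pos}(B')\to\mathrm{Pos}(B\ast_kB')$ such that the square \[ \begin{array}{ccc} \mathrm{Pos}(\partial_kB)=\mathrm{Pos}(\partial_kB') & \xrightarrow{\ s^{B'}_k\ } & \mathrm{Pos}(B')\\ \big\downarrow t^{B}_k & & \big\downarrow \mathrm{inc}^+\\ \mathrm{Pos}(B) & \xrightarrow{\ \mathrm{inc}^-\ } & \mathrm{Pos}(B\ast_kB') \end{array} \] commutes and is a pushout square in the category of globular sets.
   Context: Batanin trees are generated inductively: for every finite list $B_1,\dots,B_n$ ($n\ge0$) of Batanin trees there is a tree $[B_1,\dots,B_n]$. The suspension $\Sigma Y$ of a globular set $Y$ has $0$-cells $v_-,v_+$ and $(\Sigma Y)_{n+1}=Y_n$, every $1$-cell having source $v_-$ and target $v_+$. The globular set of positions is $\mathrm{Pos}([B_1,\dots,B_n])=\Sigma\mathrm{Pos}(B_1)\vee\cdots\vee\Sigma\mathrm{Pos}(B_n)$, the iterated wedge sum (pushout) gluing $v_+$ of each summand to $v_-$ of the next (a single $0$-cell when $n=0$); $\mathrm{inc}_i$ is the inclusion of the $i$-th summand. Boundary: $\partial_0B=[\,]$, $\partial_{k+1}[B_1,\dots,B_n]=[\partial_kB_1,\dots,\partial_kB_n]$. Cosource/cotarget $s^B_k,t^B_k\colon\mathrm{Pos}(\partial_kB)\to\mathrm{Pos}(B)$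 for $B=[B_1,\dots,B_n]$: $s^B_0$ picks $\mathrm{inc}_1(v_-)$, $t^B_0$ picks $\mathrm{inc}_n(v_+)$ (the unique $0$-position if $n=0$), $s^B_{k+1}=\bigvee_i\Sigma s^{B_i}_k$, $t^B_{k+1}=\bigvee_i\Sigma t^{B_i}_k$. Composition of trees sharing a $k$-boundary: $[B_1,\dots,B_n]\ast_0[B'_1,\dots,B'_m]=[B_1,\dots,B_n,B'_1,\dots,B'_m]$ and $[B_1,\dots,B_n]\ast_{k+1}[B'_1,\dots,B'_n]=[B_1\ast_kB'_1,\dots,B_n\ast_kB'_n]$. *)

From Stdlib Require Import List.
Import ListNotations.

Record gset : Type := GSet {
  cell : nat -> Type;
  src : forall n, cell (S n) -> cell n;
  tgt : forall n, cell (S n) -> cell n;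
  glob_src : forall n (x : cell (S (S n))), src n (src (S n) x) = src n (tgt (S n) x);
  glob_tgt : forall n (x : cell (S (S n))), tgt n (src (S n) x) = tgt n (tgt (S n) x)
}.

Record ghom (X Y : gset) : Type := GHom {
  hmap :> forall n, cell X n -> cell Y n;
  hmap_src : forall n (x : cell X (S n)), hmap n (src X n x) = src Y n (hmap (S n) x);
  hmap_tgt : forall n (x : cell X (S n)), hmap n (tgt X n x) = tgt Y n (hmap (S n) x)
}.
Arguments hmap {X Y} _ _ _.

Definition is_pushout {A X Y P : gset}
  (f : forall n, cell A n -> cell X n) (g : forall n, cell A n -> cell Y n)
  (i : ghom X P) (j : ghom Y P) : Prop :=
  (forall n (a : cell A n), hmap i n (f n a) = hmap j n (g n a)) /\
  forall (Z : gset) (u : ghom X Z) (v : ghom Y Z),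
    (forall n (a : cell A n), hmap u n (f n a) = hmap v n (g n a)) ->
    exists w : ghom P Z,
      (forall n (x : cell X n), hmap w n (hmap i n x) = hmap u n x) /\
      (forall n (y : cell Y n), hmap w n (hmap j n y) = hmap v n y) /\
      (forall w' : ghom P Z,
         (forall n (x : cell X n), hmap w' n (hmap i n x) = hmap u n x) ->
         (forall n (y : cell Y n), hmap w' n (hmap j n y) = hmap v n y) ->
         forall n (p : cell P n), hmap w' n p = hmap w n p).

Inductive tree : Type := Node : list tree -> tree.

Definition tree_ind' (P : tree -> Prop)
  (H : forall l, Forall P l -> P (Node l)) : forall t, P t :=
  fix F t := match t with
  | Node l => H l ((fix G l : Forall P l :=
                      match l with
                      | [] => Forall_nil P
                      | b :: l' => Forall_cons b (F b) (G l')
                      end) l)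
  end.

Fixpoint bd (k : nat) (B : tree) : tree :=
  match k with
  | 0 => Node []
  | S k' => match B with Node l => Node (map (bd k') l) end
  end.

Fixpoint comp (k : nat) (B B' : tree) : tree :=
  match k with
  | 0 => match B, B' with Node l, Node l' => Node (l ++ l') end
  | S k' => match B, B' with
            | Node l, Node l' =>
                Node ((fix go (l l' : list tree) : list tree :=
                         match l, l' with
                         | b :: r, b' :: r' => comp k' b b' :: go r r'
                         | _, _ => []
                         end) l l')
            end
  end.

(** * Positions: Pos([B_1..B_n]) = ΣPos(B_1) ∨ ... ∨ ΣPos(B_n)
    Concrete model of the iterated wedge of suspensions:
    - 0-cells: the n+1 glued endpoints v_0,...,v_n ([vert l]), where the
      summand ΣPos(B_i) has v_- = v_{i-1} and v_+ = v_i;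
    - (m+1)-cells: the disjoint union of the m-cells of Pos(B_1),...,Pos(B_n)
      ([lsum]), i.e. of the (m+1)-cells of the summands ΣPos(B_i). *)
Fixpoint vert (l : list tree) : Type :=
  match l with
  | [] => unit
  | _ :: l' => (unit + vert l')%type
  end.

Definition vfirst (l : list tree) : vert l :=
  match l return vert l with
  | [] => tt
  | _ :: _ => inl tt
  end.

Fixpoint vlast (l : list tree) : vert l :=
  match l return vert l with
  | [] => tt
  | _ :: l' => inr (vlast l')
  end.

Fixpoint lsum (F : tree -> Type) (l : list tree) : Type :=
  match l with
  | [] => Empty_set
  | b :: l' => (F b + lsum F l')%type
  end.

Fixpoint posc (t : tree) (n : nat) {struct t} : Type :=
  match t with
  | Node l => match n with
              | 0 => vert l
              | S m => lsum (fun b => posc b m) l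
              end
  end.

(* source / target of a 1-cell of the i-th summand: v_{i-1} / v_i *)
Fixpoint lsum_src {F} (l : list tree) : lsum F l -> vert l :=
  match l return lsum F l -> vert l with
  | [] => fun x => match x with end
  | _ :: l' => fun x => match x with
                        | inl _ => inl tt
                        | inr y => inr (lsum_src l' y)
                        end
  end.

Fixpoint lsum_tgt {F} (l : list tree) : lsum F l -> vert l :=
  match l return lsum F l -> vert l with
  | [] => fun x => match x with end
  | _ :: l' => fun x => match x with
                        | inl _ => inr (vfirst l')
                        | inr y => inr (lsum_tgt l' y)
                        end
  end.

Fixpoint lsum_map {F G : tree -> Type} (h : forall b, F b -> G b) (l : list tree)
  : lsum F l -> lsum G l :=
  match l return lsum F l -> lsum G l with
  | [] => fun x => x
  | b :: l' => fun x => match x with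
                        | inl y => inl (h b y)
                        | inr y => inr (lsum_map h l' y)
                        end
  end.

Fixpoint psrc (t : tree) (n : nat) {struct t} : posc t (S n) -> posc t n :=
  match t return posc t (S n) -> posc t n with
  | Node l => match n return posc (Node l) (S n) -> posc (Node l) n with
              | 0 => lsum_src l
              | S m => lsum_map (fun b => psrc b m) l
              end
  end.

Fixpoint ptgt (t : tree) (n : nat) {struct t} : posc t (S n) -> posc t n :=
  match t return posc t (S n) -> posc t n with
  | Node l => match n return posc (Node l) (S n) -> posc (Node l) n with
              | 0 => lsum_tgt l
              | S m => lsum_map (fun b => ptgt b m) l
              end
  end.

Lemma lsum_src_map {F G} (h : forall b, F b -> G b) l (x : lsum F l) :
  lsum_src l (lsum_map h l x) = lsum_src l x.
Proof. induction l as [|b l IH]; [destruct x|destruct x; simpl; congruence]. Qed.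

Lemma lsum_tgt_map {F G} (h : forall b, F b -> G b) l (x : lsum F l) :
  lsum_tgt l (lsum_map h l x) = lsum_tgt l x.
Proof. induction l as [|b l IH]; [destruct x|destruct x; simpl; congruence]. Qed.

Lemma lsum_map_ext2 {F G H : tree -> Type} (h1 h2 : forall b, G b -> H b)
  (g1 g2 : forall b, F b -> G b) l :
  Forall (fun b => forall y, h1 b (g1 b y) = h2 b (g2 b y)) l ->
  forall x : lsum F l, lsum_map h1 l (lsum_map g1 l x) = lsum_map h2 l (lsum_map g2 l x).
Proof.
  induction 1 as [|b l Hb Hl IH]; intros x; [destruct x|].
  destruct x as [y|y]; simpl; [rewrite Hb|rewrite IH]; reflexivity.
Qed.

Lemma pos_glob : forall t n (x : posc t (S (S n))),
  psrc t n (psrc t (S n) x) = psrc t n (ptgt t (S n) x) /\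
  ptgt t n (psrc t (S n) x) = ptgt t n (ptgt t (S n) x).
Proof.
  refine (tree_ind' _ _). intros l IH n x. destruct n as [|m]; simpl.
  - rewrite !lsum_src_map, !lsum_tgt_map. split; reflexivity.
  - split; apply lsum_map_ext2;
      refine (Forall_impl _ _ IH); intros b Hb y; apply Hb.
Qed.

Definition Pos (t : tree) : gset :=
  {| cell := posc t; src := psrc t; tgt := ptgt t;
     glob_src := fun n x => proj1 (pos_glob t n x);
     glob_tgt := fun n x => proj2 (pos_glob t n x) |}.

Fixpoint vert_of_map (f : tree -> tree) (l : list tree) : vert (map f l) -> vert l :=
  match l return vert (map f l) -> vert l with
  | [] => fun x => x
  | _ :: l' => fun x => match x with
                        | inl u => inl u
                        | inr y => inr (vert_of_map f l' y)
                        end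
  end.

Fixpoint lsum_of_map {F G : tree -> Type} (f : tree -> tree)
  (h : forall b, F (f b) -> G b) (l : list tree) : lsum F (map f l) -> lsum G l :=
  match l return lsum F (map f l) -> lsum G l with
  | [] => fun x => x
  | b :: l' => fun x => match x with
                        | inl y => inl (h b y)
                        | inr y => inr (lsum_of_map f h l' y)
                        end
  end.

(* [first] = true: cosource s (picks inc_1(v_-)); false: cotarget t (inc_n(v_+)) *)
Fixpoint cobd (first : bool) (k : nat) (B : tree) (n : nat) {struct k}
  : posc (bd k B) n -> posc B n :=
  match k return posc (bd k B) n -> posc B n with
  | 0 => match B return posc (bd 0 B) n -> posc B n with
         | Node l => match n return posc (Node []) n -> posc (Node l) n with
                     | 0 => fun _ => if first then vfirst l else vlast l
                     | S m => fun x => match x with end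
                     end
         end
  | S k' => match B return posc (bd (S k') B) n -> posc B n with
            | Node l => match n return posc (Node (map (bd k') l)) n -> posc (Node l) n with
                        | 0 => vert_of_map (bd k') l
                        | S m => lsum_of_map (bd k') (fun b => cobd first k' b m) l
                        end
            end
  end.

Definition cosrc (k : nat) (B : tree) : forall n, cell (Pos (bd k B)) n -> cell (Pos B) n :=
  cobd true k B.
Definition cotgt (k : nat) (B : tree) : forall n, cell (Pos (bd k B)) n -> cell (Pos B) n :=
  cobd false k B.

Definition pos_cast {A A' : tree} (e : A = A') : forall n, cell (Pos A) n -> cell (Pos A') n :=
  fun n x => eq_rect A (fun t => posc t n) x A' e.

From Stdlib Require Import List ProofIrrelevance ClassicalEpsilon.
Import ListNotations.

(* The inclusions follow the recursion defining the composite: for k = 0 the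
   children are concatenated, and the wedge of the two lists of suspensions
   identifies the last vertex of B with the first vertex of B'; for k > 0 the
   children are composed pairwise, so the vertices of B, B' and B *_k B'
   correspond one to one and the higher cells are glued summand by summand.
   Colimits of globular sets are computed dimensionwise, so it suffices that in
   each dimension both inclusions are injective, jointly surjective, and meet
   exactly in the image of the boundary; each of these facts follows by
   induction on k from the same facts about concatenating and zipping lists of
   summands. *)

Section PushoutCriterion.
Variables A X Y P : gset.
Variables (f : forall n, cell A n -> cell X n) (g : forall n, cell A n -> cell Y n).
Variables (i : ghom X P) (j : ghom Y P).

Hypothesis square : forall n a, i n (f n a) = j n (g n a).
Hypothesis i_inj : forall n x x', i n x = i n x' -> x = x'.
Hypothesis j_inj : forall n y y', j n y = j n y' -> y = y'.
Hypothesis meet_in_boundary :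
  forall n x y, i n x = j n y -> exists a, x = f n a /\ y = g n a.
Hypothesis jointly_surjective :
  forall n p, (exists x, i n x = p) \/ (exists y, j n y = p).

Section Glue.
Variables (Z : gset) (u : ghom X Z) (v : ghom Y Z).
Hypothesis cocone : forall n a, u n (f n a) = v n (g n a).

Lemma glue_value_exists n (p : cell P n) : exists z : cell Z n,
  (exists x, i n x = p /\ u n x = z) \/ (exists y, j n y = p /\ v n y = z).
Proof.
  destruct (jointly_surjective n p) as [[x Hx]|[y Hy]].
  - exists (u n x). left. eauto.
  - exists (v n y). right. eauto.
Qed.

Definition glue n (p : cell P n) : cell Z n :=
  proj1_sig (constructive_indefinite_description _ (glue_value_exists n p)).

Lemma glue_inl n x : glue n (i n x) = u n x.
Proof.
  unfold glue. destruct constructive_indefinite_description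
    as [z [[x' [Ex Ez]]|[y [Ey Ez]]]]; simpl; subst z.
  - now rewrite (i_inj _ _ _ Ex).
  - destruct (meet_in_boundary n x y (eq_sym Ey)) as [a [-> ->]]. symmetry. apply cocone.
Qed.

Lemma glue_inr n y : glue n (j n y) = v n y.
Proof.
  unfold glue. destruct constructive_indefinite_description
    as [z [[x [Ex Ez]]|[y' [Ey Ez]]]]; simpl; subst z.
  - destruct (meet_in_boundary n x y Ex) as [a [-> ->]]. apply cocone.
  - now rewrite (j_inj _ _ _ Ey).
Qed.

Lemma glue_src n p : glue n (src P n p) = src Z n (glue (S n) p).
Proof.
  destruct (jointly_surjective (S n) p) as [[x <-]|[y <-]].
  - rewrite <- hmap_src, !glue_inl. apply hmap_src.
  - rewrite <- hmap_src, !glue_inr. apply hmap_src.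
Qed.

Lemma glue_tgt n p : glue n (tgt P n p) = tgt Z n (glue (S n) p).
Proof.
  destruct (jointly_surjective (S n) p) as [[x <-]|[y <-]].
  - rewrite <- hmap_tgt, !glue_inl. apply hmap_tgt.
  - rewrite <- hmap_tgt, !glue_inr. apply hmap_tgt.
Qed.

Definition glue_hom : ghom P Z := GHom P Z glue glue_src glue_tgt.

End Glue.

Lemma injective_cover_is_pushout : is_pushout f g i j.
Proof.
  split; [exact square|].
  intros Z u v cocone. exists (glue_hom Z u v cocone). simpl.
  split; [exact (glue_inl Z u v cocone)|].
  split; [exact (glue_inr Z u v cocone)|].
  intros w Hwu Hwv n p.
  destruct (jointly_surjective n p) as [[x <-]|[y <-]].
  - now rewrite Hwu, (glue_inl Z u v cocone).
  - now rewrite Hwv, (glue_inr Z u v cocone).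
Qed.

End PushoutCriterion.

Fixpoint vert_app_l (l l' : list tree) : vert l -> vert (l ++ l') :=
  match l return vert l -> vert (l ++ l') with
  | [] => fun _ => vfirst l'
  | _ :: r => fun x => match x with inl u => inl u | inr y => inr (vert_app_l r l' y) end
  end.

Fixpoint vert_app_r (l l' : list tree) : vert l' -> vert (l ++ l') :=
  match l return vert l' -> vert (l ++ l') with
  | [] => fun y => y
  | _ :: r => fun y => inr (vert_app_r r l' y)
  end.

Fixpoint lsum_app_l {F : tree -> Type} (l l' : list tree) : lsum F l -> lsum F (l ++ l') :=
  match l return lsum F l -> lsum F (l ++ l') with
  | [] => fun x => match x with end
  | _ :: r => fun x => match x with inl u => inl u | inr y => inr (lsum_app_l r l' y) end
  end.

Fixpoint lsum_app_r {F : tree -> Type} (l l' : list tree) : lsum F l' -> lsum F (l ++ l') :=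
  match l return lsum F l' -> lsum F (l ++ l') with
  | [] => fun y => y
  | _ :: r => fun y => inr (lsum_app_r r l' y)
  end.

Section Concat.
Context {F G : tree -> Type}.

Lemma vert_app_l_vfirst l l' : vert_app_l l l' (vfirst l) = vfirst (l ++ l').
Proof. destruct l; reflexivity. Qed.

Lemma vert_app_l_src l l' (x : lsum F l) :
  vert_app_l l l' (lsum_src l x) = lsum_src (l ++ l') (lsum_app_l l l' x).
Proof.
  induction l as [|b r IH]; [destruct x|destruct x as [y|y]; simpl; try reflexivity].
  now rewrite IH.
Qed.

Lemma vert_app_l_tgt l l' (x : lsum F l) :
  vert_app_l l l' (lsum_tgt l x) = lsum_tgt (l ++ l') (lsum_app_l l l' x).
Proof.
  induction l as [|b r IH]; [destruct x|destruct x as [y|y]; simpl].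
  - now rewrite vert_app_l_vfirst.
  - now rewrite IH.
Qed.

Lemma vert_app_r_src l l' (x : lsum F l') :
  vert_app_r l l' (lsum_src l' x) = lsum_src (l ++ l') (lsum_app_r l l' x).
Proof. induction l as [|b r IH]; simpl; congruence. Qed.

Lemma vert_app_r_tgt l l' (x : lsum F l') :
  vert_app_r l l' (lsum_tgt l' x) = lsum_tgt (l ++ l') (lsum_app_r l l' x).
Proof. induction l as [|b r IH]; simpl; congruence. Qed.

Lemma lsum_app_l_map (h : forall b, F b -> G b) l l' (x : lsum F l) :
  lsum_app_l l l' (lsum_map h l x) = lsum_map h (l ++ l') (lsum_app_l l l' x).
Proof.
  induction l as [|b r IH]; [destruct x|destruct x as [y|y]; simpl; try reflexivity].
  now rewrite IH.
Qed.

Lemma lsum_app_r_map (h : forall b, F b -> G b) l l' (x : lsum F l') :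
  lsum_app_r l l' (lsum_map h l' x) = lsum_map h (l ++ l') (lsum_app_r l l' x).
Proof. induction l as [|b r IH]; simpl; congruence. Qed.

Lemma vert_app_vlast_vfirst l l' : vert_app_l l l' (vlast l) = vert_app_r l l' (vfirst l').
Proof. induction l as [|b r IH]; simpl; congruence. Qed.

Lemma vert_app_l_inj l l' x x' : vert_app_l l l' x = vert_app_l l l' x' -> x = x'.
Proof.
  induction l as [|b r IH]; intros Hx.
  - now destruct x, x'.
  - destruct x as [[]|y], x' as [[]|y']; simpl in Hx; try discriminate; try reflexivity.
    injection Hx as Hx. f_equal. auto.
Qed.

Lemma vert_app_r_inj l l' x x' : vert_app_r l l' x = vert_app_r l l' x' -> x = x'.
Proof. induction l as [|b r IH]; intros Hx; [exact Hx|]. injection Hx as Hx. auto. Qed.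

Lemma vert_app_meet l l' x y :
  vert_app_l l l' x = vert_app_r l l' y -> x = vlast l /\ y = vfirst l'.
Proof.
  induction l as [|b r IH]; intros Hx.
  - destruct x. split; [reflexivity|]. simpl in Hx. congruence.
  - destruct x as [[]|x]; simpl in Hx; try discriminate. injection Hx as Hx.
    destruct (IH _ Hx) as [-> ->]. split; reflexivity.
Qed.

Lemma vert_app_cover l l' (p : vert (l ++ l')) :
  (exists x, vert_app_l l l' x = p) \/ (exists y, vert_app_r l l' y = p).
Proof.
  induction l as [|b r IH].
  - right. exists p. reflexivity.
  - destruct p as [[]|p].
    + left. exists (inl tt). reflexivity.
    + destruct (IH p) as [[x Hx]|[y Hy]]; [left; exists (inr x)|right; exists y];
        simpl; congruence.
Qed.

Lemma lsum_app_l_inj l l' (x x' : lsum F l) : lsum_app_l l l' x = lsum_app_l l l' x' -> x = x'.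
Proof.
  induction l as [|b r IH]; intros Hx; [destruct x|].
  destruct x as [y|y], x' as [y'|y']; simpl in Hx; try discriminate;
    injection Hx as Hx; f_equal; auto.
Qed.

Lemma lsum_app_r_inj l l' (x x' : lsum F l') : lsum_app_r l l' x = lsum_app_r l l' x' -> x = x'.
Proof. induction l as [|b r IH]; intros Hx; [exact Hx|]. injection Hx as Hx. auto. Qed.

Lemma lsum_app_disjoint l l' (x : lsum F l) y : lsum_app_l l l' x <> lsum_app_r l l' y.
Proof.
  induction l as [|b r IH]; intros Hx; [destruct x|].
  destruct x as [x|x]; simpl in Hx; try discriminate. injection Hx as Hx. exact (IH _ Hx).
Qed.

Lemma lsum_app_cover l l' (p : lsum F (l ++ l')) :
  (exists x, lsum_app_l l l' x = p) \/ (exists y, lsum_app_r l l' y = p).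
Proof.
  induction l as [|b r IH].
  - right. exists p. reflexivity.
  - destruct p as [p|p].
    + left. exists (inl p). reflexivity.
    + destruct (IH p) as [[x Hx]|[y Hy]]; [left; exists (inr x)|right; exists y];
        simpl; congruence.
Qed.

End Concat.

Lemma pos_cast_inl c s c' s' (E : Node (c :: s) = Node (c' :: s')) (e : c = c') m
  (y : posc c m) :
  pos_cast E (S m) (inl y) = inl (pos_cast e m y).
Proof.
  injection E as <- <-.
  now rewrite (proof_irrelevance _ E eq_refl), (proof_irrelevance _ e eq_refl).
Qed.

Lemma pos_cast_inr c s c' s' (E : Node (c :: s) = Node (c' :: s')) (e : Node s = Node s') m
  (y : lsum (fun b => posc b m) s) :
  pos_cast E (S m) (inr y) = inr (pos_cast e (S m) y).
Proof.
  injection E as <- <-.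
  now rewrite (proof_irrelevance _ E eq_refl), (proof_irrelevance _ e eq_refl).
Qed.

Lemma pos_cast_vert_inl c s c' s' (E : Node (c :: s) = Node (c' :: s')) u :
  pos_cast E 0 (inl u) = inl u.
Proof.
  injection E as <- <-.
  now rewrite (proof_irrelevance _ E eq_refl).
Qed.

Lemma pos_cast_vert_inr c s c' s' (E : Node (c :: s) = Node (c' :: s')) (e : Node s = Node s')
  (y : vert s) :
  pos_cast E 0 (inr y) = inr (pos_cast e 0 y).
Proof.
  injection E as <- <-.
  now rewrite (proof_irrelevance _ E eq_refl), (proof_irrelevance _ e eq_refl).
Qed.

Section Zip.
Variables (op : tree -> tree -> tree) (f : tree -> tree).

(* With [op := comp k] this is the local fixpoint in the definition of [comp],
   so [comp (S k) (Node l) (Node l')] is convertible to [Node (zip (comp k) l l')]. *)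
Definition zip : list tree -> list tree -> list tree :=
  fix go l l' :=
    match l, l' with
    | b :: r, b' :: r' => op b b' :: go r r'
    | _, _ => []
    end.

Fixpoint vert_zip_l (l l' : list tree) : vert l -> vert (zip l l') :=
  match l return vert l -> vert (zip l l') with
  | [] => fun _ => tt
  | b :: r => match l' return vert (b :: r) -> vert (zip (b :: r) l') with
              | [] => fun _ => tt
              | _ :: r' => fun x => match x with
                                    | inl u => inl u
                                    | inr y => inr (vert_zip_l r r' y)
                                    end
              end
  end.

Fixpoint vert_zip_r (l l' : list tree) : vert l' -> vert (zip l l') :=
  match l return vert l' -> vert (zip l l') with
  | [] => fun _ => tt
  | b :: r => match l' return vert l' -> vert (zip (b :: r) l') with
              | [] => fun _ => tt
              | _ :: r' => fun x => match x with
                                    | inl u => inl u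
                                    | inr y => inr (vert_zip_r r r' y)
                                    end
              end
  end.

(* The equation [map f l = map f l'] rules out lists of different lengths,
   on which the zip would drop summands. *)
Fixpoint lsum_zip_l {F G : tree -> Type} (h : forall b b', f b = f b' -> F b -> G (op b b'))
  (l l' : list tree) : map f l = map f l' -> lsum F l -> lsum G (zip l l') :=
  match l return map f l = map f l' -> lsum F l -> lsum G (zip l l') with
  | [] => fun _ x => match x with end
  | b :: r =>
      match l' return map f (b :: r) = map f l' -> lsum F (b :: r) -> lsum G (zip (b :: r) l') with
      | [] => fun el _ => False_rect _ (nil_cons (eq_sym el))
      | b' :: r' => fun el x => match x with
          | inl y => inl (h b b' (f_equal (hd (Node [])) el) y)
          | inr y => inr (lsum_zip_l h r r' (f_equal (@tl tree) el) y)
          end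
      end
  end.

Fixpoint lsum_zip_r {F G : tree -> Type} (h : forall b b', f b = f b' -> F b' -> G (op b b'))
  (l l' : list tree) : map f l = map f l' -> lsum F l' -> lsum G (zip l l') :=
  match l return map f l = map f l' -> lsum F l' -> lsum G (zip l l') with
  | [] =>
      match l' return map f [] = map f l' -> lsum F l' -> lsum G (zip [] l') with
      | [] => fun _ x => match x with end
      | _ :: _ => fun el _ => False_rect _ (nil_cons el)
      end
  | b :: r =>
      match l' return map f (b :: r) = map f l' -> lsum F l' -> lsum G (zip (b :: r) l') with
      | [] => fun el _ => False_rect _ (nil_cons (eq_sym el))
      | b' :: r' => fun el x => match x with
          | inl y => inl (h b b' (f_equal (hd (Node [])) el) y)
          | inr y => inr (lsum_zip_r h r r' (f_equal (@tl tree) el) y)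
          end
      end
  end.

Lemma vert_zip_l_vfirst l l' : vert_zip_l l l' (vfirst l) = vfirst (zip l l').
Proof. now destruct l, l'. Qed.

Lemma vert_zip_r_vfirst l l' : vert_zip_r l l' (vfirst l') = vfirst (zip l l').
Proof. now destruct l, l'. Qed.

Lemma lsum_zip_l_map {F1 G1 F2 G2 : tree -> Type} h1 h2
  (p : forall b, F1 b -> F2 b) (q : forall b, G1 b -> G2 b)
  (H : forall b b' eb y, h2 b b' eb (p b y) = q (op b b') (h1 b b' eb y))
  l l' el (x : lsum F1 l) :
  lsum_zip_l h2 l l' el (lsum_map p l x) = lsum_map q (zip l l') (lsum_zip_l h1 l l' el x).
Proof.
  revert l' el x; induction l as [|b r IH]; intros [|b' r'] el x; try discriminate el;
    destruct x; simpl; f_equal; auto.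
Qed.

Lemma lsum_zip_r_map {F1 G1 F2 G2 : tree -> Type} h1 h2
  (p : forall b, F1 b -> F2 b) (q : forall b, G1 b -> G2 b)
  (H : forall b b' eb y, h2 b b' eb (p b' y) = q (op b b') (h1 b b' eb y))
  l l' el (x : lsum F1 l') :
  lsum_zip_r h2 l l' el (lsum_map p l' x) = lsum_map q (zip l l') (lsum_zip_r h1 l l' el x).
Proof.
  revert l' el x; induction l as [|b r IH]; intros [|b' r'] el x; try discriminate el;
    destruct x; simpl; f_equal; auto.
Qed.

Section Families.
Context {F G : tree -> Type}.

Lemma vert_zip_l_src (h : forall b b', f b = f b' -> F b -> G (op b b'))
  l l' el (x : lsum F l) :
  vert_zip_l l l' (lsum_src l x) = lsum_src (zip l l') (lsum_zip_l h l l' el x).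
Proof.
  revert l' el x; induction l as [|b r IH]; intros [|b' r'] el x; try discriminate el;
    destruct x; simpl; f_equal; auto.
Qed.

Lemma vert_zip_l_tgt (h : forall b b', f b = f b' -> F b -> G (op b b'))
  l l' el (x : lsum F l) :
  vert_zip_l l l' (lsum_tgt l x) = lsum_tgt (zip l l') (lsum_zip_l h l l' el x).
Proof.
  revert l' el x; induction l as [|b r IH]; intros [|b' r'] el x; try discriminate el;
    destruct x; simpl; f_equal; auto using vert_zip_l_vfirst.
Qed.

Lemma vert_zip_r_src (h : forall b b', f b = f b' -> F b' -> G (op b b'))
  l l' el (x : lsum F l') :
  vert_zip_r l l' (lsum_src l' x) = lsum_src (zip l l') (lsum_zip_r h l l' el x).
Proof.
  revert l' el x; induction l as [|b r IH]; intros [|b' r'] el x; try discriminate el;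
    destruct x; simpl; f_equal; auto.
Qed.

Lemma vert_zip_r_tgt (h : forall b b', f b = f b' -> F b' -> G (op b b'))
  l l' el (x : lsum F l') :
  vert_zip_r l l' (lsum_tgt l' x) = lsum_tgt (zip l l') (lsum_zip_r h l l' el x).
Proof.
  revert l' el x; induction l as [|b r IH]; intros [|b' r'] el x; try discriminate el;
    destruct x; simpl; f_equal; auto using vert_zip_r_vfirst.
Qed.

Lemma lsum_zip_l_inj (h : forall b b', f b = f b' -> F b -> G (op b b'))
  (H : forall b b' eb y y', h b b' eb y = h b b' eb y' -> y = y') l l' el x x' :
  lsum_zip_l h l l' el x = lsum_zip_l h l l' el x' -> x = x'.
Proof.
  revert l' el x x'; induction l as [|b r IH]; intros [|b' r'] el x x' Hx;
    try discriminate el; [destruct x|].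
  destruct x as [y|y], x' as [y'|y']; simpl in Hx; try discriminate;
    injection Hx as Hx; f_equal; eauto.
Qed.

Lemma lsum_zip_r_inj (h : forall b b', f b = f b' -> F b' -> G (op b b'))
  (H : forall b b' eb y y', h b b' eb y = h b b' eb y' -> y = y') l l' el x x' :
  lsum_zip_r h l l' el x = lsum_zip_r h l l' el x' -> x = x'.
Proof.
  revert l' el x x'; induction l as [|b r IH]; intros [|b' r'] el x x' Hx;
    try discriminate el; [destruct x|].
  destruct x as [y|y], x' as [y'|y']; simpl in Hx; try discriminate;
    injection Hx as Hx; f_equal; eauto.
Qed.

Lemma lsum_zip_cover (h1 : forall b b', f b = f b' -> F b -> G (op b b'))
  (h2 : forall b b', f b = f b' -> F b' -> G (op b b'))
  (H : forall b b' eb p, (exists x, h1 b b' eb x = p) \/ (exists y, h2 b b' eb y = p))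
  l l' el (p : lsum G (zip l l')) :
  (exists x, lsum_zip_l h1 l l' el x = p) \/ (exists y, lsum_zip_r h2 l l' el y = p).
Proof.
  revert l' el p; induction l as [|b r IH]; intros [|b' r'] el p;
    try solve [destruct p]; destruct p as [p|p].
  - destruct (H b b' (f_equal (hd (Node [])) el) p) as [[x <-]|[y <-]];
      [left; exists (inl x)|right; exists (inl y)]; reflexivity.
  - destruct (IH r' (f_equal (@tl tree) el) p) as [[x <-]|[y <-]];
      [left; exists (inr x)|right; exists (inr y)]; reflexivity.
Qed.

End Families.

Lemma vert_zip_l_inj l l' (el : map f l = map f l') x x' :
  vert_zip_l l l' x = vert_zip_l l l' x' -> x = x'.
Proof.
  revert l' el x x'; induction l as [|b r IH]; intros [|b' r'] el x x' Hx; try discriminate el.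
  - now destruct x, x'.
  - destruct x as [[]|y], x' as [[]|y']; simpl in Hx; try discriminate; try reflexivity.
    injection Hx as Hx. f_equal. exact (IH _ (f_equal (@tl tree) el) _ _ Hx).
Qed.

Lemma vert_zip_r_inj l l' (el : map f l = map f l') x x' :
  vert_zip_r l l' x = vert_zip_r l l' x' -> x = x'.
Proof.
  revert l' el x x'; induction l as [|b r IH]; intros [|b' r'] el x x' Hx; try discriminate el.
  - now destruct x, x'.
  - destruct x as [[]|y], x' as [[]|y']; simpl in Hx; try discriminate; try reflexivity.
    injection Hx as Hx. f_equal. exact (IH _ (f_equal (@tl tree) el) _ _ Hx).
Qed.

Lemma vert_zip_l_surjective l l' (p : vert (zip l l')) : exists x, vert_zip_l l l' x = p.
Proof.
  revert l' p; induction l as [|b r IH]; intros [|b' r'] p.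
  - exists tt. now destruct p.
  - exists tt. now destruct p.
  - exists (inl tt). now destruct p.
  - destruct p as [[]|p].
    + exists (inl tt). reflexivity.
    + destruct (IH r' p) as [x <-]. exists (inr x). reflexivity.
Qed.

Lemma vert_zip_square l l' (E : Node (map f l) = Node (map f l')) (a : vert (map f l)) :
  vert_zip_l l l' (vert_of_map f l a) = vert_zip_r l l' (vert_of_map f l' (pos_cast E 0 a)).
Proof.
  revert l' E a; induction l as [|b r IH]; intros [|b' r'] E a;
    try (injection E; discriminate).
  - reflexivity.
  - assert (e2 : Node (map f r) = Node (map f r')) by (injection E; intros; congruence).
    destruct a as [u|a].
    + now rewrite (pos_cast_vert_inl _ _ _ _ E).
    + rewrite (pos_cast_vert_inr _ _ _ _ E e2). simpl. f_equal. apply IH.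
Qed.

Lemma vert_zip_meet l l' (E : Node (map f l) = Node (map f l')) x y :
  vert_zip_l l l' x = vert_zip_r l l' y ->
  exists a : vert (map f l), x = vert_of_map f l a /\ y = vert_of_map f l' (pos_cast E 0 a).
Proof.
  revert l' E x y; induction l as [|b r IH]; intros [|b' r'] E x y Hxy;
    try (injection E; discriminate).
  - exists tt. destruct x, y. split; [reflexivity|]. now case (pos_cast E 0 tt).
  - assert (e2 : Node (map f r) = Node (map f r')) by (injection E; intros; congruence).
    destruct x as [[]|x], y as [[]|y]; simpl in Hxy; try discriminate.
    + exists (inl tt). now rewrite (pos_cast_vert_inl _ _ _ _ E).
    + injection Hxy as Hxy. destruct (IH _ e2 _ _ Hxy) as [a [-> ->]]. exists (inr a).
      now rewrite (pos_cast_vert_inr _ _ _ _ E e2).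
Qed.

Section Positions.
Variable m : nat.
Notation Pm := (fun b => posc b m).
Variables (h1 : forall b b', f b = f b' -> posc b m -> posc (op b b') m)
          (h2 : forall b b', f b = f b' -> posc b' m -> posc (op b b') m)
          (t1 s2 : forall b, posc (f b) m -> posc b m).

(* The cast along [E] and the zip along [el] use two proofs of the same equation,
   kept independent so that the induction may choose each of them freely. *)
Lemma lsum_zip_square
  (H : forall b b' eb a, h1 b b' eb (t1 b a) = h2 b b' eb (s2 b' (pos_cast eb m a)))
  l l' (E : Node (map f l) = Node (map f l')) el (a : lsum Pm (map f l)) :
  lsum_zip_l (G := Pm) h1 l l' el (lsum_of_map f t1 l a)
  = lsum_zip_r (G := Pm) h2 l l' el (lsum_of_map f s2 l' (pos_cast E (S m) a)).
Proof.
  revert l' E el a; induction l as [|b r IH]; intros [|b' r'] E el a;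
    try discriminate el; [destruct a|].
  assert (e2 : Node (map f r) = Node (map f r')) by (injection E; intros; congruence).
  destruct a as [y|y].
  - rewrite (pos_cast_inl _ _ _ _ E (f_equal (hd (Node [])) el)). simpl. f_equal. apply H.
  - rewrite (pos_cast_inr _ _ _ _ E e2). simpl. f_equal. apply IH.
Qed.

Lemma lsum_zip_meet
  (H : forall b b' eb x y, h1 b b' eb x = h2 b b' eb y ->
         exists a, x = t1 b a /\ y = s2 b' (pos_cast eb m a))
  l l' (E : Node (map f l) = Node (map f l')) el x y :
  lsum_zip_l (G := Pm) h1 l l' el x = lsum_zip_r (G := Pm) h2 l l' el y ->
  exists a, x = lsum_of_map f t1 l a /\ y = lsum_of_map f s2 l' (pos_cast E (S m) a).
Proof.
  revert l' E el x y; induction l as [|b r IH]; intros [|b' r'] E el x y Hxy;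
    try discriminate el; [destruct x|].
  assert (e2 : Node (map f r) = Node (map f r')) by (injection E; intros; congruence).
  destruct x as [x|x], y as [y|y]; simpl in Hxy; try discriminate; injection Hxy as Hxy.
  - destruct (H _ _ _ _ _ Hxy) as [a [-> ->]]. exists (inl a).
    now rewrite (pos_cast_inl _ _ _ _ E (f_equal (hd (Node [])) el)).
  - destruct (IH _ e2 _ _ _ Hxy) as [a [-> ->]]. exists (inr a).
    now rewrite (pos_cast_inr _ _ _ _ E e2).
Qed.

End Positions.

End Zip.

Definition children (t : tree) : list tree := match t with Node l => l end.

Fixpoint inc_minus (k : nat) :
  forall B B', bd k B = bd k B' -> forall n, posc B n -> posc (comp k B B') n :=
  match k return forall B B', bd k B = bd k B' -> forall n, posc B n -> posc (comp k B B') n with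
  | 0 => fun B B' _ =>
      match B, B' return forall n, posc B n -> posc (comp 0 B B') n with
      | Node l, Node l' => fun n =>
          match n return posc (Node l) n -> posc (Node (l ++ l')) n with
          | 0 => vert_app_l l l'
          | S m => lsum_app_l l l'
          end
      end
  | S k' => fun B B' =>
      match B, B' return
        bd (S k') B = bd (S k') B' -> forall n, posc B n -> posc (comp (S k') B B') n with
      | Node l, Node l' => fun e n =>
          match n return posc (Node l) n -> posc (Node (zip (comp k') l l')) n with
          | 0 => vert_zip_l (comp k') l l'
          | S m => lsum_zip_l (comp k') (bd k') (F := fun b => posc b m)
                     (fun b b' eb => inc_minus k' b b' eb m) l l' (f_equal children e)
          end
      end
  end.

Fixpoint inc_plus (k : nat) :
  forall B B', bd k B = bd k B' -> forall n, posc B' n -> posc (comp k B B') n :=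
  match k return forall B B', bd k B = bd k B' -> forall n, posc B' n -> posc (comp k B B') n with
  | 0 => fun B B' _ =>
      match B, B' return forall n, posc B' n -> posc (comp 0 B B') n with
      | Node l, Node l' => fun n =>
          match n return posc (Node l') n -> posc (Node (l ++ l')) n with
          | 0 => vert_app_r l l'
          | S m => lsum_app_r l l'
          end
      end
  | S k' => fun B B' =>
      match B, B' return
        bd (S k') B = bd (S k') B' -> forall n, posc B' n -> posc (comp (S k') B B') n with
      | Node l, Node l' => fun e n =>
          match n return posc (Node l') n -> posc (Node (zip (comp k') l l')) n with
          | 0 => vert_zip_r (comp k') l l'
          | S m => lsum_zip_r (comp k') (bd k') (F := fun b => posc b m)
                     (fun b b' eb => inc_plus k' b b' eb m) l l' (f_equal children e)
          end
      end
  end.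

Lemma inc_minus_src k : forall B B' e n x,
  inc_minus k B B' e n (psrc B n x) = psrc (comp k B B') n (inc_minus k B B' e (S n) x).
Proof.
  induction k as [|k IH]; intros [l] [l'] e [|n] x.
  - exact (vert_app_l_src l l' x).
  - exact (lsum_app_l_map (fun b => psrc b n) l l' x).
  - exact (vert_zip_l_src _ _ _ l l' (f_equal children e) x).
  - exact (lsum_zip_l_map _ _ _ _ (fun b => psrc b n) (fun b => psrc b n)
             (fun b b' eb => IH b b' eb n) l l' (f_equal children e) x).
Qed.

Lemma inc_minus_tgt k : forall B B' e n x,
  inc_minus k B B' e n (ptgt B n x) = ptgt (comp k B B') n (inc_minus k B B' e (S n) x).
Proof.
  induction k as [|k IH]; intros [l] [l'] e [|n] x.
  - exact (vert_app_l_tgt l l' x).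
  - exact (lsum_app_l_map (fun b => ptgt b n) l l' x).
  - exact (vert_zip_l_tgt _ _ _ l l' (f_equal children e) x).
  - exact (lsum_zip_l_map _ _ _ _ (fun b => ptgt b n) (fun b => ptgt b n)
             (fun b b' eb => IH b b' eb n) l l' (f_equal children e) x).
Qed.

Lemma inc_plus_src k : forall B B' e n x,
  inc_plus k B B' e n (psrc B' n x) = psrc (comp k B B') n (inc_plus k B B' e (S n) x).
Proof.
  induction k as [|k IH]; intros [l] [l'] e [|n] x.
  - exact (vert_app_r_src l l' x).
  - exact (lsum_app_r_map (fun b => psrc b n) l l' x).
  - exact (vert_zip_r_src _ _ _ l l' (f_equal children e) x).
  - exact (lsum_zip_r_map _ _ _ _ (fun b => psrc b n) (fun b => psrc b n)
             (fun b b' eb => IH b b' eb n) l l' (f_equal children e) x).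
Qed.

Lemma inc_plus_tgt k : forall B B' e n x,
  inc_plus k B B' e n (ptgt B' n x) = ptgt (comp k B B') n (inc_plus k B B' e (S n) x).
Proof.
  induction k as [|k IH]; intros [l] [l'] e [|n] x.
  - exact (vert_app_r_tgt l l' x).
  - exact (lsum_app_r_map (fun b => ptgt b n) l l' x).
  - exact (vert_zip_r_tgt _ _ _ l l' (f_equal children e) x).
  - exact (lsum_zip_r_map _ _ _ _ (fun b => ptgt b n) (fun b => ptgt b n)
             (fun b b' eb => IH b b' eb n) l l' (f_equal children e) x).
Qed.

Definition inc_minus_hom k B B' (e : bd k B = bd k B') : ghom (Pos B) (Pos (comp k B B')) :=
  GHom (Pos B) (Pos (comp k B B')) (inc_minus k B B' e) (inc_minus_src k B B' e)
    (inc_minus_tgt k B B' e).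

Definition inc_plus_hom k B B' (e : bd k B = bd k B') : ghom (Pos B') (Pos (comp k B B')) :=
  GHom (Pos B') (Pos (comp k B B')) (inc_plus k B B' e) (inc_plus_src k B B' e)
    (inc_plus_tgt k B B' e).

Lemma inc_square_commutes k : forall B B' (e : bd k B = bd k B') n a,
  inc_minus k B B' e n (cotgt k B n a) = inc_plus k B B' e n (cosrc k B' n (pos_cast e n a)).
Proof.
  induction k as [|k IH]; intros [l] [l'] e [|n] a.
  - exact (vert_app_vlast_vfirst l l').
  - destruct a.
  - exact (vert_zip_square _ _ l l' e a).
  - exact (lsum_zip_square _ _ n _ _ _ _ (fun b b' eb => IH b b' eb n) l l' e _ a).
Qed.

Lemma inc_minus_inj k : forall B B' (e : bd k B = bd k B') n x x',
  inc_minus k B B' e n x = inc_minus k B B' e n x' -> x = x'.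
Proof.
  induction k as [|k IH]; intros [l] [l'] e [|n] x x'.
  - apply vert_app_l_inj.
  - apply lsum_app_l_inj.
  - exact (vert_zip_l_inj _ _ l l' (f_equal children e) x x').
  - exact (lsum_zip_l_inj _ _ _ (fun b b' eb => IH b b' eb n) l l' _ x x').
Qed.

Lemma inc_plus_inj k : forall B B' (e : bd k B = bd k B') n y y',
  inc_plus k B B' e n y = inc_plus k B B' e n y' -> y = y'.
Proof.
  induction k as [|k IH]; intros [l] [l'] e [|n] y y'.
  - apply vert_app_r_inj.
  - apply lsum_app_r_inj.
  - exact (vert_zip_r_inj _ _ l l' (f_equal children e) y y').
  - exact (lsum_zip_r_inj _ _ _ (fun b b' eb => IH b b' eb n) l l' _ y y').
Qed.

Lemma inc_meet_in_boundary k : forall B B' (e : bd k B = bd k B') n x y,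
  inc_minus k B B' e n x = inc_plus k B B' e n y ->
  exists a, x = cotgt k B n a /\ y = cosrc k B' n (pos_cast e n a).
Proof.
  induction k as [|k IH]; intros [l] [l'] e [|n] x y Hxy.
  - destruct (vert_app_meet l l' x y Hxy) as [-> ->]. exists tt. split; reflexivity.
  - destruct (lsum_app_disjoint l l' x y Hxy).
  - exact (vert_zip_meet _ _ l l' e x y Hxy).
  - exact (lsum_zip_meet _ _ n _ _ _ _ (fun b b' eb => IH b b' eb n) l l' e _ x y Hxy).
Qed.

Lemma inc_jointly_surjective k : forall B B' (e : bd k B = bd k B') n p,
  (exists x, inc_minus k B B' e n x = p) \/ (exists y, inc_plus k B B' e n y = p).
Proof.
  induction k as [|k IH]; intros [l] [l'] e [|n] p.
  - exact (vert_app_cover l l' p).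
  - exact (lsum_app_cover l l' p).
  - left. exact (vert_zip_l_surjective _ l l' p).
  - exact (lsum_zip_cover _ _ _ _ (fun b b' eb => IH b b' eb n) l l' _ p).
Qed.

Theorem proposition2p8 (k : nat) (B B' : tree) (e : bd k B = bd k B') :
  exists (inc_m : ghom (Pos B) (Pos (comp k B B')))
         (inc_p : ghom (Pos B') (Pos (comp k B B'))),
    is_pushout (cotgt k B) (fun n x => cosrc k B' n (pos_cast e n x)) inc_m inc_p.
Proof.
  exists (inc_minus_hom k B B' e), (inc_plus_hom k B B' e).
  apply injective_cover_is_pushout.
  - apply inc_square_commutes.
  - apply inc_minus_inj.
  - apply inc_plus_inj.
  - apply inc_meet_in_boundary.
  - apply inc_jointly_surjective.
Qed.
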